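(* Let $\epsilon$ be an inversion sequence and let $\epsilon'$ be the result of applying Algorithm A (described below) to $\epsilon$. If position $i$ is a transient occurrence of $p$ when Algorithm A is applied to $\epsilon$, then position $i$ is also a transient occurrence of $p$ when Algorithm A is applied to $\epsilon'$.
   Context: An inversion sequence of length $n$ is an integer sequence with $0\le\epsilon_i<i$ for all $i$. The reduction of an integer word replaces each occurrence of its $k$-th smallest distinct value by $k-1$; a consecutive pattern $\underline{p_1p_2p_3p_4}$ occurs in a sequence at position $i$ if the reduction of its entries in positions $i,\dots,i+3$ equals $p_1p_2p_3p_4$. Let $p=\underline{0102}$ and $q=\underline{0112}$. Algorithm A, on input an integer sequence $\mathrm{seq}=\epsilon_1\cdots\epsilon_n$: let $E_p$, $E_q$ be the sets of positions of occurrences of $p$, resp. $q$, in the input sequence; set $\mathrm{last}:=$ null. For $i=1,2,\dots,n$ in order: let $N_p,N_q$ be the sets of positions of occurrences of $p$, resp. $q$, in the current sequence. If $i-2\in E_p$: set $\mathrm{last}:=\mathrm{seq}[i]$ and $\mathrm{seq}[i]:=\mathrm{seq}[i-1]$. Else if $i-2\in E_q$: set $\mathrm{last}:=\mathrm{seq}[i]$ and $\mathrm{seq}[i]:=\mathrm{seq}[i-2]$. Else if $i-2\in N_p$ or $i-2\in N_q$: swap the values of $\mathrm{seq}[i]$ and $\mathrm{last}$. Output $\mathrm{seq}$. For an input $\alpha$ with output $\alpha'$: position $i$ is an original occurrence of $p$ (for this run) if $\alpha_i=\alpha_{i+2}$ and $\alpha_i<\alpha_{i+1}<\alpha_{i+3}$;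 it is a transient occurrence of $p$ (for this run) if it is not an original occurrence of $p$ but $\alpha'_i=\alpha_{i+2}$ and $\alpha'_i<\alpha_{i+1}<\alpha_{i+3}$. *)

From mathcomp Require Import all_boot.
Set Implicit Arguments. Unset Strict Implicit. Unset Printing Implicit Defensive.

(* Sequences are lists of naturals; positions are 1-indexed as in the paper:
   position i of s is the entry nth 0 s (i-1). *)
Definition at_ (s : seq nat) (i : nat) : nat := nth 0 s i.-1.
Definition set_at (s : seq nat) (i v : nat) : seq nat := set_nth 0 s i.-1 v.

Definition is_inversion_seq (s : seq nat) : bool :=
  all (fun i => at_ s i < i) (iota 1 (size s)).

Definition reduction (w : seq nat) : seq nat :=
  let vals := sort leq (undup w) in [seq index x vals | x <- w].

Definition occurs (pat s : seq nat) (j : nat) : bool :=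
  (1 <= j) && (j + 3 <= size s) && (reduction (take 4 (drop j.-1 s)) == pat).

Definition pat_p : seq nat := [:: 0; 1; 0; 2].
Definition pat_q : seq nat := [:: 0; 1; 1; 2].

(* one iteration (index i) of Algorithm A; state = (current seq, last) *)
Definition algA_step (input : seq nat) (st : seq nat * option nat) (i : nat)
  : seq nat * option nat :=
  let: (s, last) := st in
  if occurs pat_p input (i - 2) then (set_at s i (at_ s i.-1), Some (at_ s i))
  else if occurs pat_q input (i - 2) then (set_at s i (at_ s (i - 2)), Some (at_ s i))
  else if occurs pat_p s (i - 2) || occurs pat_q s (i - 2) then
    match last with
    | Some v => (set_at s i v, Some (at_ s i))
    | None => (s, None)
    end
  else (s, last).

Definition algA (input : seq nat) : seq nat :=
  (foldl (algA_step input) (input, None) (iota 1 (size input))).1.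

Definition original_occ_p (a : seq nat) (i : nat) : bool :=
  (at_ a i == at_ a (i + 2)) && (at_ a i < at_ a (i + 1)) && (at_ a (i + 1) < at_ a (i + 3)).

Definition transient_occ_p (a : seq nat) (i : nat) : bool :=
  let a' := algA a in
  (1 <= i) && (i + 3 <= size a) && ~~ original_occ_p a i &&
  (at_ a' i == at_ a (i + 2)) && (at_ a' i < at_ a (i + 1)) && (at_ a (i + 1) < at_ a (i + 3)).

(* Algorithm A is an involution on all sequences of naturals.  Step i of A only reads the
   window at positions i-2 .. i+1 and the register [last], so the runs of A on
   e and on e' = A e can be compared window by window.  By induction on the
   position, either the two processed entries of the window of e' agree with
   e, or exactly one of them was changed, and then the first run holds the
   displaced entry of e in [last] and the second run the new entry of e'; in
   each case the second run writes back the entry of e.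
   At a transient occurrence of p at i we have e'_i <> e_i, which forces the
   second of these cases; following the first run two more steps shows that
   e' keeps e_{i+1} and e_{i+3} and carries e_i at i+2, which, since A e' = e,
   makes i a transient occurrence of p for the run on e'. *)

From mathcomp Require Import all_boot zify.
Set Implicit Arguments. Unset Strict Implicit. Unset Printing Implicit Defensive.

Arguments at_ : simpl never.
Arguments set_at : simpl never.

Definition is_p (a b c d : nat) : bool := [&& a == c, a < b & b < d].
Definition is_q (a b c d : nat) : bool := [&& a < b, b == c & c < d].

Section SortUndup.
Variable w : seq nat.
Let s := sort leq (undup w).

Lemma mem_sort_undup x : (x \in s) = (x \in w).
Proof. by rewrite mem_sort mem_undup. Qed.

Lemma sorted_sort_undup : sorted ltn s.
Proof.
by rewrite ltn_sorted_uniq_leq sort_uniq undup_uniq (sort_sorted leq_total).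
Qed.

Lemma index_sort_undup_lt : {in w &, forall x y, index x s < index y s -> x < y}.
Proof.
move=> x y xw yw; apply: (sorted_ltn_index ltn_trans sorted_sort_undup);
  by rewrite mem_sort_undup.
Qed.

Lemma index_sort_undup_inj : {in w &, forall x y, index x s = index y s -> x = y}.
Proof.
move=> x y; rewrite -!mem_sort_undup => xs ys eq_xy.
by rewrite -(nth_index 0 xs) eq_xy nth_index.
Qed.

End SortUndup.

Lemma sort_undup_window a b c d :
  c \in [:: a; b] -> a < b < d -> sort leq (undup [:: a; b; c; d]) = [:: a; b; d].
Proof.
move=> cab /andP [ab bd].
apply: (irr_sorted_eq ltn_trans ltnn (sorted_sort_undup _)); first by rewrite /= ab bd.
move=> x; rewrite mem_sort_undup !inE.
by move: cab; rewrite !inE => /orP [] /eqP ->; case: (x == a); case: (x == b).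
Qed.

Lemma reduction4 a b c d (s := sort leq (undup [:: a; b; c; d])) :
  reduction [:: a; b; c; d] = [:: index a s; index b s; index c s; index d s].
Proof. by []. Qed.

Lemma reduction_pE a b c d : (reduction [:: a; b; c; d] == pat_p) = is_p a b c d.
Proof.
rewrite reduction4; apply/idP/idP => [|/and3P [/eqP <- ab bd]]; last first.
  rewrite sort_undup_window ?inE ?eqxx ?ab //=.
  by rewrite !eqxx (ltn_eqF ab) (ltn_eqF bd) (ltn_eqF (ltn_trans ab bd)).
set w := [:: a; b; c; d].
have [wa wb wc wd] : [/\ a \in w, b \in w, c \in w & d \in w].
  by rewrite !inE !eqxx !orbT.
rewrite !eqseq_cons => /and4P [/eqP ra /eqP rb /eqP rc /andP [/eqP rd _]].
have ac : a = c by apply: (index_sort_undup_inj wa wc); rewrite ra rc.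
have ab : a < b by apply: (index_sort_undup_lt wa wb); rewrite ra rb.
have bd : b < d by apply: (index_sort_undup_lt wb wd); rewrite rb rd.
by rewrite /is_p ac eqxx -ac ab bd.
Qed.

Lemma reduction_qE a b c d : (reduction [:: a; b; c; d] == pat_q) = is_q a b c d.
Proof.
rewrite reduction4; apply/idP/idP => [|/and3P [ab /eqP <- bd]]; last first.
  rewrite sort_undup_window ?inE ?eqxx ?orbT ?ab //=.
  by rewrite !eqxx (ltn_eqF ab) (ltn_eqF bd) (ltn_eqF (ltn_trans ab bd)).
set w := [:: a; b; c; d].
have [wa wb wc wd] : [/\ a \in w, b \in w, c \in w & d \in w].
  by rewrite !inE !eqxx !orbT.
rewrite !eqseq_cons => /and4P [/eqP ra /eqP rb /eqP rc /andP [/eqP rd _]].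
have ab : a < b by apply: (index_sort_undup_lt wa wb); rewrite ra rb.
have bc : b = c by apply: (index_sort_undup_inj wb wc); rewrite rb rc.
have cd : c < d by apply: (index_sort_undup_lt wc wd); rewrite rc rd.
by rewrite /is_q ab bc eqxx cd.
Qed.

Lemma take4_drop (s : seq nat) j : j + 4 <= size s ->
  take 4 (drop j s) = [:: nth 0 s j; nth 0 s j.+1; nth 0 s j.+2; nth 0 s j.+3].
Proof. by move=> h; do 4 (rewrite (drop_nth 0) /=; last lia); rewrite take0. Qed.

Lemma occursE pat s j : occurs pat s j =
  [&& 0 < j, j + 3 <= size s &
      reduction [:: at_ s j; at_ s j.+1; at_ s j.+2; at_ s j.+3] == pat].
Proof.
rewrite /occurs; case: j => // j.
have [h|_] := leqP (j.+1 + 3) (size s); last by rewrite !andbF.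
by rewrite take4_drop //; lia.
Qed.

Lemma occurs_pE s j : occurs pat_p s j =
  [&& 0 < j, j + 3 <= size s & is_p (at_ s j) (at_ s j.+1) (at_ s j.+2) (at_ s j.+3)].
Proof. by rewrite occursE reduction_pE. Qed.

Lemma occurs_qE s j : occurs pat_q s j =
  [&& 0 < j, j + 3 <= size s & is_q (at_ s j) (at_ s j.+1) (at_ s j.+2) (at_ s j.+3)].
Proof. by rewrite occursE reduction_qE. Qed.

(* Step j+2 of Algorithm A: [a b c d] is the input at positions j .. j+3,
   [x y] the entries already written at j and j+1, [l] the register, and [v]
   tells whether the window fits in the sequence.  The result is the entry
   written at j+2 and the new register. *)
Definition local_step (v : bool) (a b c d x y : nat) (l : option nat) :
  nat * option nat :=
  if v && is_p a b c d then (y, Some c)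
  else if v && is_q a b c d then (x, Some c)
  else if v && (is_p x y c d || is_q x y c d) then
    if l is Some u then (u, Some c) else (c, None)
  else (c, l).

Lemma local_step_same v a b c d l :
  local_step v a b c d a b l =
  if v && is_p a b c d then (b, Some c)
  else if v && is_q a b c d then (a, Some c) else (c, l).
Proof.
rewrite /local_step; case: v => //=.
by case: (is_p a b c d) => //=; case: (is_q a b c d).
Qed.

Lemma local_step_inert v a b c d y l :
  y <= a -> b <= a -> local_step v a b c d a y l = (c, l).
Proof.
have no u : u <= a -> is_p a u c d = false /\ is_q a u c d = false.
  by rewrite /is_p /is_q; lia.
move=> /no [ny1 ny2] /no [nb1 nb2].
by rewrite /local_step ny1 ny2 nb1 nb2 !andbF.
Qed.

Lemma local_step_fst v (a b c d x : nat) :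
  x < b -> a < b -> x != a ->
  local_step v a b c d x b (Some a) =
  if v && is_p a b c d then (b, Some c)
  else if v && is_q a b c d then (x, Some c)
  else if v && is_p x b c d then (a, Some c) else (c, Some a).
Proof.
move=> xb ab xa; rewrite /local_step.
case: v => //=; case: ifP => // _; case: ifP => // nq.
by congr (if _ then _ else _); rewrite orbC /is_q; move: nq; rewrite /is_q; lia.
Qed.

Definition run (e : seq nat) (k : nat) : seq nat * option nat :=
  foldl (algA_step e) (e, None) (iota 1 k).

Lemma run_succ e k : run e k.+1 = algA_step e (run e k) k.+1.
Proof. by rewrite /run -(addn1 k) iotaD foldl_cat /= add1n addn1. Qed.

Lemma at_set_at s i v j : 0 < i -> 0 < j ->
  at_ (set_at s i v) j = if j == i then v else at_ s j.
Proof.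
move=> i_gt0 j_gt0; rewrite /at_ /set_at nth_set_nth /=.
by congr (if _ then _ else _); apply/eqP/eqP; lia.
Qed.

Lemma algA_step_at e st i j : 0 < i -> 0 < j -> j != i ->
  at_ (algA_step e st i).1 j = at_ st.1 j.
Proof.
move=> i_gt0 j_gt0 ji; case: st => s [u|]; rewrite /algA_step;
  by do ?case: ifP => _ //=; rewrite at_set_at // (negbTE ji).
Qed.

Lemma size_algA_step e st i : 0 < i <= size st.1 ->
  size (algA_step e st i).1 = size st.1.
Proof.
case: st => s [u|] /= hi; rewrite /algA_step;
  by do ?case: ifP => _ //=; rewrite /set_at size_set_nth; lia.
Qed.

Lemma size_run e k : k <= size e -> size (run e k).1 = size e.
Proof.
elim: k => [|k IHk] // hk.
by rewrite run_succ size_algA_step IHk //; lia.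
Qed.

Lemma run_at_unprocessed e k j : k < j -> at_ (run e k).1 j = at_ e j.
Proof.
elim: k => [|k IHk] // hk.
by rewrite run_succ algA_step_at ?IHk //; lia.
Qed.

Lemma run_at_processed e k j : 0 < j <= k -> k <= size e ->
  at_ (run e k).1 j = at_ (algA e) j.
Proof.
move=> hj hk; rewrite /algA -/(run e (size e)).
elim: (size e) hk => [|m IHm] hk; first lia.
case: (ltngtP k m.+1) => [lt_km|gt_km|->] //; last lia.
by rewrite run_succ algA_step_at ?IHm //; lia.
Qed.

Lemma size_algA e : size (algA e) = size e.
Proof. exact: size_run. Qed.

Lemma run_window e j : 0 < j -> j.+2 <= size e ->
  (at_ (algA e) j.+2, (run e j.+2).2) =
  local_step (j.+3 <= size e) (at_ e j) (at_ e j.+1) (at_ e j.+2) (at_ e j.+3)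
             (at_ (algA e) j) (at_ (algA e) j.+1) (run e j.+1).2.
Proof.
move=> j_gt0 hj.
have [out0 out1 out2] : [/\ at_ (algA e) j = at_ (run e j.+1).1 j,
  at_ (algA e) j.+1 = at_ (run e j.+1).1 j.+1 &
  at_ (algA e) j.+2 = at_ (run e j.+2).1 j.+2].
  by split; rewrite run_at_processed //; lia.
rewrite out0 out1 out2 run_succ.
have := @run_at_unprocessed e j.+1 j.+2 (ltnSn _).
have := @run_at_unprocessed e j.+1 j.+3 (ltnW (ltnSn _)).
have := @size_run e j.+1 (ltnW hj).
case: (run e j.+1) => s l /= size_s s3 s2.
rewrite /algA_step !subSS subn0 !occurs_pE !occurs_qE size_s s2 s3 j_gt0 addn3 /=.
rewrite /local_step -andb_orr.
do 2 (case: ifP => _; first by rewrite /= at_set_at // eqxx).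
by case: ifP => _; case: l => [u|] /=; rewrite ?at_set_at ?eqxx ?s2.
Qed.

Lemma algA_at_border e j : 0 < j <= size e -> (j <= 2) || (j == size e) ->
  at_ (algA e) j = at_ e j.
Proof.
case: j => [//|j] hj border.
rewrite -(@run_at_processed e j.+1 j.+1) ?leqnn ?run_succ //; try lia.
have := @run_at_unprocessed e j j.+1 (ltnSn _).
have := @size_run e j (ltnW hj).
case: (run e j) => s l /= size_s <-.
have no_window : (0 < j.+1 - 2) && (j.+1 - 2 + 3 <= size e) = false by lia.
by rewrite /algA_step !occurs_pE !occurs_qE size_s !andbA no_window.
Qed.

(* The runs of A on e and on e' = A e just after step j+1, where
   [a b c] = e_j e_{j+1} e_{j+2}, [x y] = e'_j e'_{j+1}, and [l1], [l2] are
   the registers of the first and second run. *)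
Inductive lockstep (a b c x y : nat) : option nat -> option nat -> Prop :=
| Lockstep_same l1 l2 of x = a & y = b : lockstep a b c x y l1 l2
| Lockstep_snd of x = a & y != b & y <= a & b <= a & a < c :
    lockstep a b c x y (Some b) (Some y)
| Lockstep_fst of y = b & x != a & x < b & a < b :
    lockstep a b c x y (Some a) (Some x).

Lemma lockstep_step_same v a b c d f z w u l1 l1' l2 l2' :
  local_step true a b c d a b l1 = (z, l1') ->
  (local_step v b c d f b z l1').1 = w ->
  local_step true a b z w a b l2 = (u, l2') ->
  u = c /\ lockstep b c d b z l1' l2'.
Proof.
rewrite local_step_same /=; case: ifP => [/and3P [/eqP <- ab bd] [<- <-]|np].
  rewrite local_step_inert ?leqnn ?(ltnW ab) // => <-.
  have [p' q'] : is_p a b b d = false /\ is_q a b b d by rewrite /is_p /is_q; lia.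
  by rewrite local_step_same p' q' => -[<- <-]; split=> //; apply: Lockstep_snd; lia.
case: ifP => [/and3P [ab /eqP <- bd] [<- <-]|nq [<- <-]].
  rewrite local_step_inert ?leqnn ?(ltnW ab) // => <-.
  have p' : is_p a b a d by rewrite /is_p; lia.
  by rewrite local_step_same p' => -[<- <-]; split=> //; apply: Lockstep_snd; lia.
rewrite local_step_same /= => step_w.
have [p' q'] : is_p a b c w = false /\ is_q a b c w = false.
  move: step_w np nq; rewrite /is_p /is_q => <-.
  by case: v => /=; do ?[case: ifP => ? /=]; lia.
by rewrite local_step_same p' q' => -[<- <-]; split=> //; apply: Lockstep_same.
Qed.

Lemma lockstep_step_snd v (a b c d f y z w u : nat) l1' l2' :
  y != b -> y <= a -> b <= a -> a < c ->
  local_step true a b c d a y (Some b) = (z, l1') ->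
  (local_step v b c d f y z l1').1 = w ->
  local_step true a y z w a b (Some y) = (u, l2') ->
  u = c /\ lockstep b c d y z l1' l2'.
Proof.
move=> yb ya ba ac; rewrite local_step_inert // => -[<- <-] _.
by rewrite local_step_inert // => -[<- <-]; split=> //; apply: Lockstep_fst; lia.
Qed.

Lemma lockstep_step_fst v (a b c d f x z w u : nat) l1' l2' :
  x != a -> x < b -> a < b ->
  local_step true a b c d x b (Some a) = (z, l1') ->
  (local_step v b c d f b z l1').1 = w ->
  local_step true x b z w a b (Some x) = (u, l2') ->
  u = c /\ lockstep b c d b z l1' l2'.
Proof.
move=> xa xb ab; have ax : a != x by rewrite eq_sym.
rewrite local_step_fst //=; case: ifP => [/and3P [/eqP <- _ bd] [<- <-]|np].
  rewrite local_step_inert ?leqnn ?(ltnW ab) // => <-.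
  have [p' q'] : is_p x b b d = false /\ is_q x b b d by rewrite /is_p /is_q; lia.
  rewrite local_step_fst // p' q' => -[<- <-].
  by split=> //; apply: Lockstep_snd; lia.
case: ifP => [/and3P [_ /eqP <- bd] [<- <-]|nq].
  rewrite local_step_inert ?leqnn ?(ltnW xb) // => <-.
  have p' : is_p x b x d by rewrite /is_p; lia.
  rewrite local_step_fst // p' => -[<- <-].
  by split=> //; apply: Lockstep_snd; lia.
case: ifP => [/and3P [/eqP <- _ bd] [<- <-]|nx [<- <-]].
  rewrite local_step_inert ?(ltnW xb) ?(ltnW ab) // => <-.
  have [p' q' p''] : [/\ is_p x b a d = false, is_q x b a d = false & is_p a b a d].
    by rewrite /is_p /is_q; split; lia.
  rewrite local_step_fst // p' q' p'' => -[<- <-].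
  by split=> //; apply: Lockstep_snd; lia.
rewrite local_step_same /= => step_w.
have [p' q' p''] : [/\ is_p x b c w = false, is_q x b c w = false & is_p a b c w = false].
  move: step_w np nq nx; rewrite /is_p /is_q => <-.
  by case: v => /=; do ?[case: ifP => ? /=]; split; lia.
by rewrite local_step_fst // p' q' p'' => -[<- <-]; split=> //; apply: Lockstep_same.
Qed.

(* [z] and [w] are written by the first run at j+2 and j+3, [u] by the second
   run at j+2. *)
Lemma lockstep_step v a b c d f x y z w u l1 l1' l2 l2' :
  lockstep a b c x y l1 l2 ->
  local_step true a b c d x y l1 = (z, l1') ->
  (local_step v b c d f y z l1').1 = w ->
  local_step true x y z w a b l2 = (u, l2') ->
  u = c /\ lockstep b c d y z l1' l2'.
Proof.
case=> [{}l1 {}l2 -> -> | -> | ->].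
- exact: lockstep_step_same.
- exact: lockstep_step_snd.
- exact: lockstep_step_fst.
Qed.

Lemma lockstep_run e j : 0 < j -> j.+2 <= size e ->
  (forall m, 0 < m <= j.+1 -> at_ (algA (algA e)) m = at_ e m) /\
  lockstep (at_ e j) (at_ e j.+1) (at_ e j.+2) (at_ (algA e) j) (at_ (algA e) j.+1)
           (run e j.+1).2 (run (algA e) j.+1).2.
Proof.
elim: j => [//|[|j] IHj] _ hj.
  split=> [m hm|]; first by rewrite !algA_at_border ?size_algA //; lia.
  by apply: Lockstep_same; rewrite algA_at_border //; lia.
have [IHm IHlock] := IHj isT (ltnW hj).
have first3 := run_window (ltn0Sn j) (ltnW hj); rewrite hj in first3.
have first4 := run_window (ltn0Sn j.+1) hj.
have second3 := @run_window (algA e) j.+1 (ltn0Sn j); rewrite size_algA in second3.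
have {}second3 := second3 (ltnW hj).
rewrite hj (IHm j.+1 (leqnSn _)) (IHm j.+2 (leqnn _)) in second3.
have [out3 L] := lockstep_step IHlock (esym first3) (congr1 fst (esym first4))
  (esym second3).
split=> // m hm.
case: (ltngtP m j.+3) => [lt_m3|gt_m3|-> //]; last lia.
by apply: IHm; lia.
Qed.

Lemma algA_involutive e : algA (algA e) = e.
Proof.
apply: (@eq_from_nth _ 0); first by rewrite !size_algA.
move=> i; rewrite !size_algA => hi.
have : at_ (algA (algA e)) i.+1 = at_ e i.+1.
  have [border|inner] := boolP ((i.+1 <= 2) || (i.+1 == size e)).
    by rewrite !algA_at_border ?size_algA.
  have [i_gt0 i2] : 0 < i /\ i.+2 <= size e by lia.
  by have [-> //] := lockstep_run i_gt0 i2; rewrite leqnn.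
by [].
Qed.

Lemma transient_window e i : transient_occ_p e i ->
  [/\ at_ e i < at_ e (i + 1), at_ (algA e) (i + 1) = at_ e (i + 1),
      at_ (algA e) (i + 2) = at_ e i & at_ (algA e) (i + 3) = at_ e (i + 3)].
Proof.
rewrite /transient_occ_p /original_occ_p /= !addn1 !addn2 !addn3 -!andbA.
case/and3P => i_gt0 hi /and4P [not_orig /eqP xC xB BD].
have [_ L] := lockstep_run i_gt0 (ltnW hi).
have step2 := run_window i_gt0 (ltnW hi); rewrite hi in step2.
have step3 := run_window (ltn0Sn i) hi.
move: step2 step3; case: L => [l1 l2 xA _|xA _ _ _ _|yB xA xB' AB];
  try by move: not_orig; lia.
have [nP nQ P] : [/\ is_p (at_ e i) (at_ e i.+1) (at_ e i.+2) (at_ e i.+3) = false,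
    is_q (at_ e i) (at_ e i.+1) (at_ e i.+2) (at_ e i.+3) = false
  & is_p (at_ (algA e) i) (at_ e i.+1) (at_ e i.+2) (at_ e i.+3)].
  by rewrite /is_p /is_q; split; lia.
rewrite yB local_step_fst // nP nQ P /= => -[out2 ->].
by rewrite out2 local_step_inert; [case | lia | lia].
Qed.

Theorem corollary3 (eps : seq nat) (i : nat) :
  is_inversion_seq eps ->
  transient_occ_p eps i ->
  transient_occ_p (algA eps) i.
Proof.
move=> _ tr; have [ab out1 out2 out3] := transient_window tr.
move: tr; rewrite /transient_occ_p /original_occ_p /= algA_involutive size_algA.
by rewrite out1 out2 out3; lia.
Qed.
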